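(* Let $X\sim P_X$ on $\mathcal{X}$, let $(\Omega_k^\star)_{k=1}^K$ be a measurable partition of $\mathcal{X}$ up to null sets with measurable $f_k^\star$, $\mu=\sum_k\mathbf{1}_{\Omega_k^\star}f_k^\star$, $|\mu(X)|\le B$ a.s. (and $Y=\mu(X)+\xi$, $\mathbb{E}[\xi\mid X]=0$, $\mathbb{E}\xi^2<\infty$). Let experts satisfy $\sup_{k,x}|f_k(x;\theta_k)|\le B_{\mathrm{stu}}$ for all parameters considered. Fix $k$, $\varepsilon\in(0,1/2)$, $\tau>0$ and set $A_{k,\varepsilon}=\Omega_k^\star\cap\mathcal{G}_\varepsilon(\tau;\phi)\cap\{x:p_k^{(\tau)}(x;\phi)\ge1-\varepsilon\}$. Then \[\mathbb{E}\big[(\mu(X)-h_{\theta,\phi,\tau}(X))^2\mathbf{1}_{A_{k,\varepsilon}}(X)\big]\ge\tfrac12\mathbb{E}\big[|f_k(X;\theta_k)-f_k^\star(X)|^2\mathbf{1}_{A_{k,\varepsilon}}(X)\big]-4B_{\mathrm{stu}}^2\varepsilon^2P_X(A_{k,\varepsilon}).\]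
   Context: $p_k^{(\tau)}(x;\phi)=e^{a_k(x;\phi)/\tau}/\sum_je^{a_j(x;\phi)/\tau}$ for router logits $a_k(\cdot;\phi)$; $h_{\theta,\phi,\tau}=\sum_kp_k^{(\tau)}f_k(\cdot;\theta_k)$; $\mathcal{G}_\varepsilon(\tau;\phi)=\{x:\max_jp_j^{(\tau)}(x;\phi)>1-\varepsilon\}$. *)

From HB Require Import structures.
From mathcomp Require Import all_boot all_order all_algebra.
From mathcomp Require Import all_classical all_reals all_analysis.
Set Implicit Arguments. Unset Strict Implicit. Unset Printing Implicit Defensive.
Import Order.TTheory GRing.Theory Num.Theory.
Local Open Scope classical_set_scope.
Local Open Scope ring_scope.

Definition softmax_gate (R : realType) (T : Type) (K : nat) (Phi : Type)
  (a : 'I_K -> Phi -> T -> R) (tau : R) (phi : Phi) (k : 'I_K) (x : T) : R :=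
  expR (a k phi x / tau) / \sum_(j < K) expR (a j phi x / tau).

Definition moe (R : realType) (T : Type) (K : nat) (Theta Phi : Type)
  (f : 'I_K -> Theta -> T -> R) (theta : 'I_K -> Theta)
  (a : 'I_K -> Phi -> T -> R) (tau : R) (phi : Phi) (x : T) : R :=
  \sum_(k < K) softmax_gate a tau phi k x * f k (theta k) x.

Definition confident_set (R : realType) (T : Type) (K : nat) (Phi : Type)
  (a : 'I_K -> Phi -> T -> R) (tau : R) (phi : Phi) (eps : R) : set T :=
  [set x | exists j : 'I_K, 1 - eps < softmax_gate a tau phi j x].

Definition piecewise_target (R : realType) (T : Type) (K : nat)
  (Omega : 'I_K -> set T) (fstar : 'I_K -> T -> R) (x : T) : R :=
  \sum_(k < K) (\1_(Omega k) x) * fstar k x.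

From HB Require Import structures.
From mathcomp Require Import all_boot all_order all_algebra.
From mathcomp Require Import all_classical all_reals all_analysis.
From mathcomp Require Import measurable_realfun.
From mathcomp Require Import ring lra.
Set Implicit Arguments.
Unset Strict Implicit.
Unset Printing Implicit Defensive.

Import Order.TTheory GRing.Theory Num.Theory.
Local Open Scope classical_set_scope.
Local Open Scope ring_scope.

(* Almost everywhere on Omega_k the target is f*_k (the pieces overlap only
   on null sets), and where the router puts mass at least 1 - eps on expert k
   the mixture is a convex combination of experts bounded by Bstu that lies
   within 2 Bstu eps of f_k.  The elementary
   inequality u^2/2 <= (u - w)^2 + w^2 then gives, pointwise on A,
   |f_k - f*_k|^2 / 2 <= (mu - h)^2 + 4 Bstu^2 eps^2, and integrating over A
   yields the claim. *)

Lemma half_sqr_dist_le (R : realFieldType) (y z t b : R) :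
  `|t - z| <= b -> 2^-1 * `|z - y| ^+ 2 <= (y - t) ^+ 2 + b ^+ 2.
Proof.
rewrite ler_norml real_normK ?num_real // => /andP[tz_ge tz_le].
(* with u = z - y and w = z - t the gap is (u - 2w)^2 / 2 *)
by have := sqr_ge0 (z - y - 2 * (z - t)); nra.
Qed.

Lemma dist_convex_comb_le (R : realFieldType) (n : nat) (w g : 'I_n -> R)
    (M e : R) (k : 'I_n) :
  (forall j, 0 <= w j) -> \sum_j w j = 1 -> (forall j, `|g j| <= M) ->
  1 - e <= w k ->
  `|\sum_j w j * g j - g k| <= 2 * M * e.
Proof.
move=> w_ge0 w_sum1 gM wk.
have -> : \sum_j w j * g j - g k = \sum_j w j * (g j - g k).
  by under [RHS]eq_bigr do rewrite mulrBr; rewrite sumrB -mulr_suml w_sum1 mul1r.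
rewrite (bigD1 k) //= subrr mulr0 add0r.
have rest : \sum_(j | j != k) w j = 1 - w k.
  by have := w_sum1; rewrite (bigD1 k) //=; lra.
apply: le_trans (ler_norm_sum _ _ _) _.
apply: (@le_trans _ _ (\sum_(j | j != k) w j * (2 * M))).
  apply: ler_sum => j _; rewrite normrM ger0_norm // ler_wpM2l //.
  by apply: le_trans (ler_normB _ _) _; have := gM j; have := gM k; lra.
have M_ge0 : 0 <= M := le_trans (normr_ge0 _) (gM k).
by rewrite -mulr_suml rest mulrC ler_wpM2l ?mulr_ge0 //; lra.
Qed.

Lemma sum_expR_gt0 (R : realType) (n : nat) (g : 'I_n -> R) :
  (0 < n)%N -> 0 < \sum_(i < n) expR (g i).
Proof.
case: n g => // n g _; rewrite big_ord_recl ltr_pwDl ?expR_gt0 //.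
by apply: sumr_ge0 => i _; exact: expR_ge0.
Qed.

Lemma ae_ge0_le_integralZ_cst d (T : measurableType d) (R : realType)
    (mu : {measure set T -> \bar R}) (A : set T) (F G : T -> R) (r c : R) :
  measurable A -> measurable_fun A F -> measurable_fun A G ->
  (forall x, A x -> 0 <= F x) -> (forall x, A x -> 0 <= G x) ->
  0 <= r -> 0 <= c ->
  {ae mu, forall x, A x -> r * G x <= F x + c} ->
  (r%:E * \int[mu]_(x in A) (G x)%:E <=
     \int[mu]_(x in A) (F x)%:E + c%:E * mu A)%E.
Proof.
move=> mA mF mG F_ge0 G_ge0 r_ge0 c_ge0 GF.
have mEF : measurable_fun A (EFin \o F) by exact/measurable_EFinP.
have mEG : measurable_fun A (EFin \o G) by exact/measurable_EFinP.
have EG_ge0 x : A x -> (0 <= (G x)%:E)%E by move=> Ax; rewrite lee_fin G_ge0.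
have EF_ge0 x : A x -> (0 <= (F x)%:E)%E by move=> Ax; rewrite lee_fin F_ge0.
rewrite -(ge0_integralZl_EFin mu mA EG_ge0 mEG r_ge0) -integral_cst //.
rewrite -(ge0_integralD mu mA EF_ge0 mEF) //.
apply: ae_ge0_le_integral => //.
- by move=> x Ax; rewrite lee_fin mulr_ge0 ?G_ge0.
- exact: measurable_funeM.
- by move=> x Ax; rewrite lee_fin addr_ge0 ?F_ge0.
- by apply: emeasurable_funD => //; exact: measurable_cst.
Qed.

Section softmax.
Variables (R : realType) (T : Type) (K : nat) (Phi : Type).
Variables (a : 'I_K -> Phi -> T -> R) (tau : R) (phi : Phi).
Hypothesis K_gt0 : (0 < K)%N.

Lemma softmax_gate_ge0 j x : 0 <= softmax_gate a tau phi j x.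
Proof.
by rewrite divr_ge0 ?expR_ge0 //; apply: sumr_ge0 => i _; exact: expR_ge0.
Qed.

Lemma sum_softmax_gate x : \sum_j softmax_gate a tau phi j x = 1.
Proof. by rewrite -mulr_suml divff // lt0r_neq0 // sum_expR_gt0. Qed.

End softmax.

Lemma piecewise_target_on_piece (R : realType) (T : Type) (K : nat)
    (Omega : 'I_K -> set T) (fstar : 'I_K -> T -> R) (k : 'I_K) (x : T) :
  Omega k x -> (forall j, j != k -> ~ Omega j x) ->
  piecewise_target Omega fstar x = fstar k x.
Proof.
move=> Okx notO; rewrite /piecewise_target (bigD1 k) //= indicE mem_set //.
rewrite mul1r big1 ?addr0 // => j jk.
by rewrite indicE memNset ?mul0r //; exact: notO.
Qed.

Lemma moe_dist_expert_le (R : realType) (T : Type) (K : nat) (Theta Phi : Type)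
    (f : 'I_K -> Theta -> T -> R) (theta : 'I_K -> Theta)
    (a : 'I_K -> Phi -> T -> R) (tau : R) (phi : Phi) (Bstu eps : R)
    (k : 'I_K) (x : T) :
  (forall j th x, `|f j th x| <= Bstu) ->
  1 - eps <= softmax_gate a tau phi k x ->
  `|moe f theta a tau phi x - f k (theta k) x| <= 2 * Bstu * eps.
Proof.
move=> fB pk; apply: dist_convex_comb_le => //.
- by move=> j; exact: softmax_gate_ge0.
- by apply: sum_softmax_gate; exact: leq_ltn_trans (ltn_ord k).
Qed.

Section measurability.
Variables (d : measure_display) (T : measurableType d) (R : realType).

Lemma measurable_lt_level (g : T -> R) (c : R) :
  measurable_fun setT g -> measurable [set x | c < g x].
Proof.
by move=> mg; rewrite -[X in measurable X]setTI -preimage_itvoy; exact: mg.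
Qed.

Lemma measurable_le_level (g : T -> R) (c : R) :
  measurable_fun setT g -> measurable [set x | c <= g x].
Proof.
by move=> mg; rewrite -[X in measurable X]setTI -preimage_itvcy; exact: mg.
Qed.

Variables (K : nat) (Phi : Type) (a : 'I_K -> Phi -> T -> R) (tau : R) (phi : Phi).
Hypothesis ma : forall j, measurable_fun setT (a j phi).

Lemma measurable_softmax_gate j : measurable_fun setT (softmax_gate a tau phi j).
Proof.
have mexp i : measurable_fun setT (fun x => expR (a i phi x / tau)).
  apply: measurableT_comp; first exact: measurable_expR.
  by apply: measurable_funM => //; exact: measurable_cst.
have S_gt0 x : 0 < \sum_i expR (a i phi x / tau).
  by apply: sum_expR_gt0; exact: leq_ltn_trans (ltn_ord j).
(* 1 / S = expR (- ln S) as S > 0: this avoids the measurability of inversion. *)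
rewrite (_ : softmax_gate a tau phi j =
    fun x => expR (a j phi x / tau) * expR (- ln (\sum_i expR (a i phi x / tau)))).
  apply: measurable_funM => //; apply: measurableT_comp => //.
  apply: measurableT_comp => //; apply: measurableT_comp => //.
  exact: measurable_sum.
by apply/funext => x; rewrite expRN lnK // posrE.
Qed.

Lemma measurable_confident_set eps : measurable (confident_set a tau phi eps).
Proof.
rewrite (_ : confident_set _ _ _ _ =
    \bigcup_(j in [set: 'I_K]) [set x | 1 - eps < softmax_gate a tau phi j x]).
  apply: fin_bigcup_measurable => // j _.
  exact/measurable_lt_level/measurable_softmax_gate.
by apply/seteqP; split => x /= [j]; [exists j|move=> _; exists j].
Qed.

Lemma measurable_moe (Theta : Type) (f : 'I_K -> Theta -> T -> R)
    (theta : 'I_K -> Theta) :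
  (forall j th, measurable_fun setT (f j th)) ->
  measurable_fun setT (moe f theta a tau phi).
Proof.
move=> mf; apply: measurable_sum => j.
by apply: measurable_funM => //; exact: measurable_softmax_gate.
Qed.

End measurability.

Lemma measurable_piecewise_target d (T : measurableType d) (R : realType)
    (K : nat) (Omega : 'I_K -> set T) (fstar : 'I_K -> T -> R) :
  (forall j, measurable (Omega j)) -> (forall j, measurable_fun setT (fstar j)) ->
  measurable_fun setT (piecewise_target Omega fstar).
Proof.
move=> mO mfs; apply: measurable_sum => j.
by apply: measurable_funM => //; exact: measurable_indic.
Qed.

Lemma ae_notin_other_pieces d (T : measurableType d) (R : realType)
    (mu : {measure set T -> \bar R}) (K : nat) (Omega : 'I_K -> set T) (k : 'I_K) :
  (forall i j, i != j -> mu.-negligible (Omega i `&` Omega j)) ->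
  {ae mu, forall x, Omega k x -> forall j, j != k -> ~ Omega j x}.
Proof.
move=> negO; have ae_j j : {ae mu, forall x, Omega k x -> j != k -> ~ Omega j x}.
  have [->|jk] := eqVneq j k; first exact: nearW.
  apply: negligibleS (negO k j _); last by rewrite eq_sym.
  by move=> x /= nx; split; apply: contrapT => nO; apply: nx => Okx _ Ojx.
by apply: filterS (filter_forall _ ae_j) => x all_j Okx j; exact: all_j.
Qed.

Theorem mainTheorem10
  (R : realType) (d : measure_display) (T : measurableType d)
  (P : probability T R) (K : nat)
  (Omega : 'I_K -> set T) (fstar : 'I_K -> T -> R) (B : R)
  (Theta Phi : Type) (f : 'I_K -> Theta -> T -> R) (a : 'I_K -> Phi -> T -> R)
  (Bstu : R) (theta : 'I_K -> Theta) (phi : Phi)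
  (k : 'I_K) (eps tau : R) :
  (forall j, measurable (Omega j)) ->
  (forall i j, i != j -> P.-negligible (Omega i `&` Omega j)) ->
  P.-negligible (~` \bigcup_(j in [set: 'I_K]) Omega j) ->
  (forall j, measurable_fun setT (fstar j)) ->
  (forall j th, measurable_fun setT (f j th)) ->
  (forall j ph, measurable_fun setT (a j ph)) ->
  {ae P, forall x, `|piecewise_target Omega fstar x| <= B} ->
  (forall j th x, `|f j th x| <= Bstu) ->
  0 < eps -> eps < 2^-1 -> 0 < tau ->
  let A := Omega k `&` confident_set a tau phi eps
           `&` [set x | 1 - eps <= softmax_gate a tau phi k x] in
  let mu := piecewise_target Omega fstar in
  let h := moe f theta a tau phi in
  (\int[P]_(x in A) ((mu x - h x) ^+ 2)%:E >=
     (2^-1)%:E * \int[P]_(x in A) ((`|f k (theta k) x - fstar k x|) ^+ 2)%:E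
     - (4 * Bstu ^+ 2 * eps ^+ 2)%:E * P A)%E.
Proof.
move=> mO negO _ mfs mf ma _ fB _ _ _; cbv zeta.
set A := Omega k `&` _ `&` _; set mu := piecewise_target _ _; set h := moe _ _ _ _ _.
have mA : measurable A.
  apply: measurableI.
    by apply: measurableI; [exact: mO|exact: measurable_confident_set].
  by apply: measurable_le_level; exact: measurable_softmax_gate.
have mmu_h : measurable_fun setT (fun x => mu x - h x).
  apply: measurable_funB; first exact: measurable_piecewise_target.
  exact: measurable_moe.
have c_sqr : 4 * Bstu ^+ 2 * eps ^+ 2 = (2 * Bstu * eps) ^+ 2 by ring.
rewrite c_sqr leeBlDr ?fin_numM ?fin_num_measure //.
apply: ae_ge0_le_integralZ_cst => //;
  try by [move=> x _; exact: sqr_ge0|exact: sqr_ge0].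
- exact/measurable_funTS/measurable_funX.
- apply/measurable_funTS/measurable_funX/measurableT_comp => //.
  exact: measurable_funB.
- apply: filterS (ae_notin_other_pieces k negO) => x notO [[Okx _] pk].
  rewrite /mu (piecewise_target_on_piece _ Okx (notO Okx)).
  exact/half_sqr_dist_le/moe_dist_expert_le.
Qed.
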